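(* Let $d,n\in\mathbb{N}$, $p\ge1$, and $\Omega\subseteq\mathbb{R}^d$ compact. On the space $\mathcal{S}_{=n}(\Omega)$ of multisets of exactly $n$ elements of $\Omega$, endowed with the metric $W_1$, define $s(X;a)=\mathrm{sort}(a^TX)\in\mathbb{R}^n$, where $X=\{\!\!\{ x_1,\dots,x_n\}\!\!\}$, $a^TX=(a\cdot x_1,\dots,a\cdot x_n)$, $\mathrm{sort}$ sorts entries nondecreasingly, and $a$ is uniform on $S^{d-1}$; the output metric is $\ell_p$. Then $s$ is uniformly Lipschitz and lower Lipschitz in expectation.
   Context: $W_1(\{\!\!\{ x_j\}\!\!\},\{\!\!\{ y_j\}\!\!\})=\min_{\tau\in S_n}\sum_{j=1}^n\|x_j-y_{\tau(j)}\|_1$. A parametric function is uniformly Lipschitz if it is $L$-Lipschitz in $x$ for every parameter with a common $L$; it is lower Lipschitz in expectation if there is $c>0$ with $c^p\le\mathbb{E}_a\left[\left(\frac{\|s(X;a)-s(Y;a)\|_p}{W_1(X,Y)}\right)^p\right]$ whenever $W_1(X,Y)>0$. *)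

From HB Require Import structures.
From mathcomp Require Import all_boot all_order all_algebra all_fingroup.
From mathcomp Require Import all_classical all_reals all_analysis.
Set Implicit Arguments. Unset Strict Implicit. Unset Printing Implicit Defensive.
Import Order.TTheory GRing.Theory Num.Theory.
Import numFieldNormedType.Exports.
Local Open Scope classical_set_scope.
Local Open Scope ring_scope.

Definition borelRd (R : realType) (d : nat) :=
  g_sigma_algebraType (open : set (set 'rV[R]_d)).

Definition sphere (R : realType) (d : nat) : set 'rV[R]_d :=
  [set a | \sum_(i < d) a ord0 i ^+ 2 = 1].

Definition orthogonal_mx (R : realType) (d : nat) (Q : 'M[R]_d) : Prop :=
  Q *m Q^T = 1%:M.

(* mu is the uniform probability on S^{d-1}: the (unique) Borel probability
   measure on R^d carried by the sphere and invariant under all orthogonal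
   transformations. *)
Definition uniform_on_sphere (R : realType) (d : nat)
  (mu : probability (borelRd R d) R) : Prop :=
  mu (~` @sphere R d) = 0%E /\
  forall (Q : 'M[R]_d) (B : set (borelRd R d)), orthogonal_mx Q ->
    measurable B -> mu ((fun x : 'rV[R]_d => x *m Q) @^-1` B) = mu B.

Definition l1norm (R : realType) (d : nat) (v : 'rV[R]_d) : R :=
  \sum_(i < d) `|v ord0 i|.

(* multisets of n points of R^d, represented by n-tuples (all quantities below
   are invariant under reindexing) *)
Definition cost (R : realType) (d n : nat) (X Y : 'I_n -> 'rV[R]_d)
  (tau : 'S_n) : R :=
  \sum_(j < n) l1norm (X j - Y (tau j)).

Definition W1 (R : realType) (d n : nat) (X Y : 'I_n -> 'rV[R]_d) : R :=
  \big[Num.min/cost X Y 1%g]_(tau : 'S_n) cost X Y tau.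

Definition proj (R : realType) (d n : nat) (a : 'rV[R]_d)
  (X : 'I_n -> 'rV[R]_d) (j : 'I_n) : R :=
  \sum_(i < d) a ord0 i * X j ord0 i.

Definition s_embed (R : realType) (d n : nat) (X : 'I_n -> 'rV[R]_d)
  (a : 'rV[R]_d) : seq R :=
  sort <=%R [seq proj a X j | j <- enum 'I_n].

Definition lp_dist (R : realType) (n : nat) (p : R) (u v : seq R) : R :=
  (\sum_(j < n) `|u`_j - v`_j| `^ p) `^ p^-1.

Definition multiset_in (R : realType) (d n : nat) (Om : set 'rV[R]_d)
  (X : 'I_n -> 'rV[R]_d) : Prop := forall j, Om (X j).

From Pilot Require Import Defs.
From HB Require Import structures.
From mathcomp Require Import all_boot all_order all_algebra all_fingroup.
From mathcomp Require Import all_classical all_reals all_analysis.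
From mathcomp Require Import ring lra zify.
Set Implicit Arguments. Unset Strict Implicit. Unset Printing Implicit Defensive.
Import Order.TTheory GRing.Theory Num.Theory.
Import numFieldNormedType.Exports.
Local Open Scope classical_set_scope.
Local Open Scope ring_scope.

(* Upper bound: for a unit vector [a] we have [|a . x| <= |x|_1], and sorting is
   1-Lipschitz for the sup norm, so every coordinate of [s(X;a) - s(Y;a)] is at most
   the cost of any matching of [X] with [Y].
   Lower bound: sorting realizes a matching, so [|s(X;a) - s(Y;a)|_1 >= eps W1(X,Y)]
   as soon as [|a . (x_j - y_k)| >= eps |x_j - y_k|_1] for all pairs [j, k].  By
   rotation invariance, the band [|a . w| < eps |w|_1] has measure at most that of
   [|a_0| < eta], which tends to the measure of the hyperplane [a_0 = 0] as [eta]
   goes to 0.  That hyperplane is null: the reflections across [e_k + t e_(k+1)],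
   [t = 0, 1, 2, ...], give infinitely many copies of a coordinate subspace, all of
   the same measure and overlapping only in a smaller coordinate subspace.  A union
   bound over the [n^2] pairs then leaves a set of directions of probability 1/2. *)

Section SortedNth.
Variable R : realDomainType.
Implicit Types (s : seq R) (x : R).

Lemma sorted_count_le_nth s i : sorted <=%R s -> (i < size s)%N ->
  (i.+1 <= count (fun y : R => (y <= s`_i)%R) s)%N.
Proof.
move=> s_sorted lt_i; rewrite -[s in count _ s](cat_take_drop i.+1) count_cat.
suff -> : count (fun y : R => y <= s`_i) (take i.+1 s) = i.+1 by exact: leq_addr.
rewrite -[RHS](size_takel lt_i); apply/eqP; rewrite -all_count.
apply/(all_nthP 0) => k; rewrite size_takel // => lt_k; rewrite nth_take //.
by apply: (le_sorted_leq_nth 0 s_sorted); rewrite ?inE /=; lia.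
Qed.

Lemma sorted_count_gt_nth s i x : sorted <=%R s -> (i < size s)%N -> x < s`_i ->
  (size s - i <= count (fun y : R => (x < y)%R) s)%N.
Proof.
move=> s_sorted lt_i lt_x; rewrite -[s in count _ s](cat_take_drop i) count_cat.
suff -> : count (fun y : R => x < y) (drop i s) = (size s - i)%N by exact: leq_addl.
rewrite -size_drop; apply/eqP; rewrite -all_count.
apply/(all_nthP 0) => k; rewrite size_drop => lt_k; rewrite nth_drop.
apply: (lt_le_trans lt_x); apply: (le_sorted_leq_nth 0 s_sorted);
  by rewrite ?inE ?leq_addr //= -ltn_subRL.
Qed.

End SortedNth.

Section SortOrdinal.
Variables (R : realDomainType) (n : nat).
Local Notation sortv f := (sort <=%R [seq f j | j <- enum 'I_n]).

Lemma size_sortv (f : 'I_n -> R) : size (sortv f) = n.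
Proof. by rewrite size_sort size_map size_enum_ord. Qed.

Lemma sorted_sortv (f : 'I_n -> R) : sorted <=%R (sortv f).
Proof. exact/sort_sorted/le_total. Qed.

(* A pointwise shift by [c] shifts every order statistic by at most [c]:
   otherwise [f] would have more than [n - i] values above the [i]-th one of [g]. *)
Lemma sortv_nth_le_shift (f g : 'I_n -> R) (c : R) :
  (forall j, f j <= g j + c) -> forall i, (i < n)%N ->
  (sortv f)`_i <= (sortv g)`_i + c.
Proof.
move=> le_fg i lt_i; rewrite leNgt; apply/negP => lt_gf.
have := sorted_count_gt_nth (sorted_sortv f) _ lt_gf.
rewrite size_sortv count_sort => /(_ lt_i) gt_f.
have := sorted_count_le_nth (sorted_sortv g) (i := i).
rewrite size_sortv count_sort => /(_ lt_i) le_g.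
have count_fg : (count (fun y : R => (sortv g)`_i + c < y)%R [seq f j | j <- enum 'I_n] <=
    count (fun y : R => (sortv g)`_i < y)%R [seq g j | j <- enum 'I_n])%N.
  rewrite !count_map; apply: sub_count => j /= lt_j.
  by rewrite -(ltrD2r c); apply: (lt_le_trans lt_j).
have split_g : (count (fun y : R => (sortv g)`_i < y)%R [seq g j | j <- enum 'I_n] +
    count (fun y : R => y <= (sortv g)`_i)%R [seq g j | j <- enum 'I_n])%N =
    size [seq g j | j <- enum 'I_n].
  rewrite -(count_predC (fun y : R => (y <= (sortv g)`_i)%R)) addnC.
  by congr (_ + _)%N; apply: eq_count => y; rewrite /= ltNge.
rewrite size_map size_enum_ord in split_g.
move: gt_f le_g count_fg split_g.
(* name the counts, so that [lia] treats each as a single atom *)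
set cf := count _ [seq f j | j <- enum 'I_n].
set cg_gt := count (fun y : R => (sortv g)`_i < y)%R _.
set cg_le := count _ [seq g j | j <- enum 'I_n].
lia.
Qed.

Lemma sortv_nth_dist_le (f g : 'I_n -> R) (c : R) :
  (forall j, `|f j - g j| <= c) -> forall i, (i < n)%N ->
  `|(sortv f)`_i - (sortv g)`_i| <= c.
Proof.
move=> le_fg i lt_i.
have [le_gc le_fc] : (forall j, f j <= g j + c) /\ (forall j, g j <= f j + c).
  by split=> j; move: (le_fg j); rewrite ler_norml => /andP[]; lra.
have := sortv_nth_le_shift le_gc lt_i; have := sortv_nth_le_shift le_fc lt_i.
by rewrite ler_norml => ? ?; apply/andP; split; lra.
Qed.

Lemma sortv_perm (f : 'I_n -> R) (t : 'S_n) : sortv (f \o t) = sortv f.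
Proof.
apply/perm_sort_leP; rewrite (map_comp f t); apply: perm_map.
apply: uniq_perm; [rewrite map_inj_uniq ?enum_uniq //; exact: perm_inj | exact: enum_uniq |].
move=> x; rewrite mem_enum; apply/mapP; exists (t^-1 x)%g; rewrite ?mem_enum ?permKV //.
Qed.

Lemma sortv_nthE (f : 'I_n -> R) : exists t : 'S_n,
  forall i : 'I_n, (sortv f)`_i = f (t i).
Proof.
have : perm_eq (sortv f) [tuple f j | j < n] by rewrite perm_sort.
case/tuple_permP => t ->; exists t => i.
by rewrite -tnth_nth !tnth_mktuple.
Qed.

Lemma sum_sortv_distE (f g : 'I_n -> R) : exists t : 'S_n,
  \sum_(i < n) `|(sortv f)`_i - (sortv g)`_i| = \sum_(j < n) `|f j - g (t j)|.
Proof.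
have [tf Ef] := sortv_nthE f; have [tg Eg] := sortv_nthE g.
exists (tf^-1 * tg)%g; rewrite [RHS](reindex_inj (@perm_inj _ tf)) /=.
by apply: eq_bigr => i _; rewrite Ef Eg permM permK.
Qed.

End SortOrdinal.

Section LpDistance.
Variable R : realType.

Lemma powR_le_powR (r x y : R) : 0 <= r -> 0 <= x -> x <= y -> x `^ r <= y `^ r.
Proof. by move=> r0 x0 xy; apply: ge0_ler_powR; rewrite ?nnegrE // (le_trans x0). Qed.

Lemma powRK (p x : R) : 0 < p -> 0 <= x -> (x `^ p) `^ p^-1 = x.
Proof. by move=> p0 x0; rewrite -powRrM mulfV ?gt_eqF // powRr1. Qed.

Lemma dist_nth_le_lp_dist n (p : R) (u v : seq R) i : 0 < p -> (i < n)%N ->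
  `|u`_i - v`_i| <= lp_dist n p u v.
Proof.
move=> p0 lt_i; rewrite /lp_dist -[leLHS](powRK p0 (normr_ge0 _)).
apply: powR_le_powR; [by rewrite invr_ge0 ltW | exact: powR_ge0 |].
rewrite (bigD1 (Ordinal lt_i)) //= lerDl.
by apply: sumr_ge0 => j _; exact: powR_ge0.
Qed.

Lemma sum_dist_le_lp_dist n (p : R) (u v : seq R) : 0 < p ->
  \sum_(i < n) `|u`_i - v`_i| <= n%:R * lp_dist n p u v.
Proof.
move=> p0; rewrite mulr_natl -[X in _ *+ X](card_ord n) -sumr_const.
by apply: ler_sum => i _; exact: dist_nth_le_lp_dist.
Qed.

Lemma lp_dist_le n (p c : R) (u v : seq R) : 1 <= p -> 0 <= c ->
  (forall i, (i < n)%N -> `|u`_i - v`_i| <= c) -> lp_dist n p u v <= n.+1%:R * c.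
Proof.
move=> p1 c0 le_uv; have p0 : 0 < p by exact: lt_le_trans p1.
have N0 : 0 <= n.+1%:R :> R by [].
rewrite /lp_dist -[leRHS](powRK p0 (mulr_ge0 N0 c0)).
apply: powR_le_powR; [by rewrite invr_ge0 ltW | by apply: sumr_ge0 => j _; exact: powR_ge0 |].
apply: (@le_trans _ _ (\sum_(j < n) c `^ p)).
  by apply: ler_sum => j _; apply: powR_le_powR; rewrite ?le_uv // ltW.
rewrite sumr_const card_ord -[X in X <= _]mulr_natl powRM // ler_wpM2r ?powR_ge0 //.
by rewrite (le_trans _ (le1r_powR _ p1)) ?ler_nat ?ler1n.
Qed.

Lemma lp_dist_ge0 n (p : R) (u v : seq R) : 0 <= lp_dist n p u v.
Proof. exact: powR_ge0. Qed.

End LpDistance.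

Section Geometry.
Variables (R : realType) (d : nat).
Implicit Types (a u w : 'rV[R]_d).

Definition dotp a w : R := \sum_(i < d) a ord0 i * w ord0 i.

Lemma dotpC a w : dotp a w = dotp w a.
Proof. by apply: eq_bigr => i _; rewrite mulrC. Qed.

Lemma dotpBr a u w : dotp a (u - w) = dotp a u - dotp a w.
Proof. by rewrite /dotp -sumrB; apply: eq_bigr => i _; rewrite !mxE mulrBr. Qed.

Lemma dotpBl a u w : dotp (u - w) a = dotp u a - dotp w a.
Proof. by rewrite dotpC dotpBr !(dotpC a). Qed.

Lemma dotpZr a w (c : R) : dotp a (c *: w) = c * dotp a w.
Proof. by rewrite /dotp mulr_sumr; apply: eq_bigr => i _; rewrite mxE mulrCA. Qed.

Lemma dotp_delta a (i : 'I_d) : dotp a (\row_j (j == i)%:R) = a ord0 i.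
Proof.
rewrite /dotp (bigD1 i) //= big1 => [|j /negbTE ji]; first by rewrite !mxE eqxx mulr1 addr0.
by rewrite !mxE ji mulr0.
Qed.

Lemma dotpp_ge0 w : 0 <= dotp w w.
Proof. by apply: sumr_ge0 => i _; rewrite -expr2 sqr_ge0. Qed.

Lemma dotpp_eq0 w : (dotp w w == 0) = (w == 0).
Proof.
apply/idP/eqP => [|->]; last by rewrite /dotp big1 // => i _; rewrite mxE mulr0.
rewrite psumr_eq0 => [/allP w0|i _]; last by rewrite -expr2 sqr_ge0.
apply/rowP => i; have /implyP := w0 i (mem_index_enum _).
by rewrite mulf_eq0 orbb mxE => /(_ isT)/eqP.
Qed.

Lemma coord_le_sqrt_dotpp w i : `|w ord0 i| <= Num.sqrt (dotp w w).
Proof.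
rewrite -(@ler_pXn2r _ 2) ?nnegrE ?sqrtr_ge0 // sqr_sqrtr ?dotpp_ge0 //.
rewrite real_normK ?num_real // /dotp (bigD1 i) //= -expr2 lerDl.
by apply: sumr_ge0 => j _; rewrite -expr2 sqr_ge0.
Qed.

Lemma l1norm_le_sqrt_dotpp w : l1norm w <= d%:R * Num.sqrt (dotp w w).
Proof.
rewrite mulr_natl -[X in _ *+ X](card_ord d) -sumr_const.
by apply: ler_sum => i _; exact: coord_le_sqrt_dotpp.
Qed.

Lemma mulmx_trE a w : a *m w^T = (dotp a w)%:M.
Proof.
by rewrite [LHS]mx11_scalar; congr _%:M; rewrite !mxE; apply: eq_bigr => i _; rewrite mxE.
Qed.

Definition reflection w : 'M[R]_d := 1%:M - (2 / dotp w w) *: (w^T *m w).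

Lemma reflectionE a w : a *m reflection w = a - (2 * dotp a w / dotp w w) *: w.
Proof.
rewrite /reflection mulmxBr mulmx1 -scalemxAr mulmxA mulmx_trE mul_scalar_mx.
by rewrite scalerA mulrAC.
Qed.

Lemma reflection_orthogonal w : w != 0 -> orthogonal_mx (reflection w).
Proof.
rewrite -dotpp_eq0 => w0; have tr : (reflection w)^T = reflection w.
  by rewrite /reflection linearB /= trmx1 linearZ /= trmx_mul trmxK.
rewrite /orthogonal_mx tr /reflection mulmxBr mulmx1 mulmxBl mul1mx -!scalemxAr.
rewrite -!scalemxAl mulmxA -(mulmxA _ w) mulmx_trE mul_mx_scalar -scalemxAl !scalerA.
have -> : 2 / dotp w w * (2 / dotp w w) * dotp w w = 2 / dotp w w + 2 / dotp w w.
  by field.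
rewrite scalerDl; set V := _ *: (w^T *m w).
have -> : V - (V + V) = - V by rewrite opprD addrA subrr add0r.
by rewrite opprK subrK.
Qed.

End Geometry.

Section LipschitzBounds.
Variables (R : realType) (d n : nat).
Implicit Types (a w : 'rV[R]_d) (X Y : 'I_n -> 'rV[R]_d).

Lemma proj_subE a X Y j k : Defs.proj a X j - Defs.proj a Y k = dotp a (X j - Y k).
Proof. by rewrite /Defs.proj /dotp -sumrB; apply: eq_bigr => i _; rewrite !mxE mulrBr. Qed.

Lemma l1norm_ge0 w : 0 <= l1norm w.
Proof. exact: sumr_ge0. Qed.

Lemma l1norm_le_cost X Y (t : 'S_n) j : l1norm (X j - Y (t j)) <= cost X Y t.
Proof.
by rewrite /cost (bigD1 j) //= lerDl; apply: sumr_ge0 => i _; exact: l1norm_ge0.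
Qed.

Lemma sphere_coord_le1 a i : sphere a -> `|a ord0 i| <= 1.
Proof.
move=> sa; rewrite -(@ler_pXn2r _ 2) ?nnegrE // expr1n real_normK ?num_real //.
by rewrite -sa (bigD1 i) //= lerDl; apply: sumr_ge0 => j _; exact: sqr_ge0.
Qed.

Lemma dotp_le_l1norm a w : sphere a -> `|dotp a w| <= l1norm w.
Proof.
move=> sa; apply: le_trans (ler_norm_sum _ _ _) _; apply: ler_sum => i _.
by rewrite normrM ler_piMl ?sphere_coord_le1.
Qed.

(* Each order statistic of [a^T X] is within [cost X Y t] of that of [a^T Y],
   since reordering [Y] by [t] does not change the sorted vector. *)
Lemma s_embed_lipschitz (p : R) a X Y : 1 <= p -> sphere a ->
  lp_dist n p (s_embed X a) (s_embed Y a) <= n.+1%:R * W1 X Y.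
Proof.
move=> p1 sa; rewrite -ler_pdivrMl //.
have le_cost t : lp_dist n p (s_embed X a) (s_embed Y a) <= n.+1%:R * cost X Y t.
  apply: lp_dist_le => // [|i lt_i]; first by apply: sumr_ge0 => i _; exact: l1norm_ge0.
  rewrite /s_embed -(sortv_perm (fun j => Defs.proj a Y j) t).
  apply: (sortv_nth_dist_le (f := fun j => Defs.proj a X j)) => // j /=.
  by rewrite proj_subE (le_trans (dotp_le_l1norm _ sa)) ?l1norm_le_cost.
by apply: le_bigmin => [|t _]; rewrite ler_pdivrMl.
Qed.

Lemma W1_le_sum_sort_dist (eps : R) a X Y : 0 <= eps ->
  (forall j k, eps * l1norm (X j - Y k) <= `|dotp a (X j - Y k)|) ->
  eps * W1 X Y <= \sum_(i < n) `|(s_embed X a)`_i - (s_embed Y a)`_i|.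
Proof.
move=> eps0 aXY; have [t ->] := sum_sortv_distE (Defs.proj a X) (Defs.proj a Y).
apply: le_trans (_ : eps * cost X Y t <= _); first by rewrite ler_wpM2l ?bigmin_le.
by rewrite /cost mulr_sumr; apply: ler_sum => j _; rewrite proj_subE aXY.
Qed.

End LipschitzBounds.

Section Measurability.
Variables (R : realType) (d : nat).

Lemma continuous_sum (T : topologicalType) (I : Type) (r : seq I) (P : pred I)
    (F : I -> T -> R) :
  (forall i, continuous (F i)) -> continuous (fun a => \sum_(i <- r | P i) F i a).
Proof.
move=> cF; elim: r => [|i r IH] x.
  under eq_fun do rewrite big_nil; exact: cst_continuous.
under eq_fun do rewrite big_cons.
case: (P i); last exact: IH.
by apply: (@continuousD _ R^o _ (F i)); [exact: cF | exact: IH].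
Qed.

Lemma continuous_dotp (w : 'rV[R]_d) : continuous (fun a : 'rV[R]_d => dotp a w).
Proof.
rewrite /dotp; apply: continuous_sum => i x.
by apply: (@continuousM R _ (fun a : 'rV[R]_d => a ord0 i) (fun=> w ord0 i));
  [exact: coord_continuous | exact: cst_continuous].
Qed.

Lemma continuous_mulmx_coord (Q : 'M[R]_d) (i : 'I_d) :
  continuous (fun a : 'rV[R]_d => (a *m Q) ord0 i).
Proof.
have -> : (fun a : 'rV[R]_d => (a *m Q) ord0 i) = fun a => dotp a (row i Q^T).
  by apply: funext => a; rewrite mxE; apply: eq_bigr => j _; rewrite !mxE.
exact: continuous_dotp.
Qed.

Lemma closed_measurable (A : set 'rV[R]_d) : closed A -> measurable (A : set (borelRd R d)).
Proof.
move=> cA; rewrite -[A]setCK; apply: measurableC; apply: sub_sigma_algebra.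
exact: closed_openC.
Qed.

Lemma measurable_zeros (I : Type) (D : set I) (f : I -> 'rV[R]_d -> R) :
  (forall i, continuous (f i)) ->
  measurable ([set a | forall i, D i -> f i a = 0] : set (borelRd R d)).
Proof.
move=> cf; apply: closed_measurable.
have -> : [set a | forall i, D i -> f i a = 0] = \bigcap_(i in D) f i @^-1` [set 0].
  by [].
apply: closed_bigI => i _.
by apply: preimage_closed => [x _|]; [exact: cf | exact: closed_eq].
Qed.

Lemma measurable_norm_lt (f : 'rV[R]_d -> R) (e : R) : continuous f ->
  measurable ([set a | `|f a| < e] : set (borelRd R d)).
Proof.
move=> cf; apply: sub_sigma_algebra.
apply: (@open_comp _ _ (fun a => `|f a|) [set x | x < e]); last exact: open_lt.
by move=> x _; apply: continuous_comp (cf x) _; exact: norm_continuous.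
Qed.

Lemma measurable_sphere : measurable (@sphere R d : set (borelRd R d)).
Proof.
apply: closed_measurable.
have -> : @sphere R d =
    (fun a : 'rV[R]_d => \sum_(i < d) a ord0 i ^+ 2) @^-1` [set x | x = 1] by [].
apply: preimage_closed => [x _|]; last exact: closed_eq.
apply: continuous_sum => i {}x.
by apply: (@continuousM R _ (fun a : 'rV[R]_d => a ord0 i) (fun a => a ord0 i));
  exact: coord_continuous.
Qed.

End Measurability.

Lemma natmul_le1_eq0 (R : archiRealFieldType) (m : R) :
  0 <= m -> (forall M : nat, M%:R * m <= 1) -> m = 0.
Proof.
move=> m0 le1; apply/eqP; rewrite eq_le m0 andbT leNgt; apply/negP => m_gt0.
have := le1 (Num.Def.archi_bound m^-1); rewrite -ler_pdivlMr // div1r.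
by rewrite leNgt archi_boundP // invr_ge0 ltW.
Qed.

(* Any [M] of the sets [P t `\` N] are disjoint, with total mass [M * mu A <= 1]. *)
Lemma probability_null_of_overlapping (d : measure_display) (T : measurableType d)
    (R : realType) (mu : probability T R) (A N : set T) (P : nat -> set T) :
  measurable A -> measurable N -> mu N = 0%E ->
  (forall t, measurable (P t)) -> (forall t, mu (P t) = mu A) ->
  (forall s t, s != t -> P s `&` P t `<=` N) -> mu A = 0%E.
Proof.
move=> mA mN N0 mP PA overlap.
have muPD t : mu (P t `\` N) = mu A.
  rewrite -(PA t) [in RHS](measureDI mu (mP t) mN).
  by rewrite (subset_measure0 (measurableI _ _ (mP t) mN) mN (@subIsetr _ _ _) N0) adde0.
have muA : mu A = (fine (mu A))%:E by rewrite fineK ?fin_num_measure.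
rewrite muA; congr EFin; set m := fine (mu A).
apply: natmul_le1_eq0; first exact/fine_ge0/measure_ge0.
move=> M; pose D (j : 'I_M) := P j `\` N.
have mD j : measurable (D j) by apply: measurableD.
have tD : trivIset setT D.
  apply/trivIsetP => i j _ _ ij; apply/seteqP; split => // a [[Pi nNi] [Pj _]].
  by apply: nNi; apply: (overlap i j) => //; rewrite /= (inj_eq val_inj) in ij.
have mU : measurable (\big[setU/set0]_(j < M) D j).
  by apply: bigsetU_measurable => j _; exact: mD.
have := probability_le1 mu mU.
rewrite (measure_bigsetU_ord mu predT mD tD) (eq_bigr (fun=> m%:E)) => [|j _];
  last by rewrite -muA; exact: muPD.
by rewrite sumEFin lee_fin sumr_const card_ord mulr_natl.
Qed.

Section MeasureBounds.
Variables (d : measure_display) (T : measurableType d) (R : realType).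
Variable mu : {measure set T -> \bar R}.

Lemma measure_bigsetU_le (I : Type) (r : seq I) (F : I -> set T) :
  (forall i, measurable (F i)) ->
  (mu (\big[setU/set0]_(i <- r) F i) <= \sum_(i <- r) mu (F i))%E.
Proof.
move=> mF; elim: r => [|i r IH]; first by rewrite !big_nil measure0.
rewrite !big_cons; apply: le_trans (measureU2 _ (mF i) _) (leeD2l _ IH).
by apply: bigsetU_measurable => j _; exact: mF.
Qed.

(* Compares [f] with a simple function, so [f] need not be measurable. *)
Lemma measure_scale_le_integral (f : T -> \bar R) (G : set T) (k : R) :
  0 <= k -> measurable G -> (forall a, (0 <= f a)%E) ->
  (forall a, G a -> (k%:E <= f a)%E) ->
  (k%:E * mu G <= \int[mu]_(a in setT) f a)%E.
Proof.
move=> k0 mG f0 fG; rewrite ge0_integralTE //; apply: ereal_sup_ubound => /=.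
exists (scale_nnsfun (indic_nnsfun R mG) k0).
  move=> a /=; rewrite measurable_realfun.mindicE.
  case: (boolP (a \in G)) => [/set_mem Ga|_]; last by rewrite mulr0.
  by rewrite mulr1; exact: fG.
rewrite (_ : HBNNSimple.NonNegSimpleFun.sort _ = cst k \* (\1_G)%R) ?sintegralrM; last first.
  by apply: funext => a /=; rewrite measurable_realfun.mindicE.
rewrite (_ : (\1_G)%R = HBNNSimple.NonNegSimpleFun.sort (indic_nnsfun R mG)) ?sintegralrM.
  by rewrite /= sintegral_indic.
by apply: funext => a /=; rewrite measurable_realfun.mindicE.
Qed.

End MeasureBounds.

Section CoordinateSubspaces.
Variables (R : realType) (d : nat).
Local Notation T := 'rV[R]_d.+1.

Definition coord_subspace (k : nat) : set T :=
  [set a | forall i : 'I_d.+1, (i < k)%N -> a ord0 i = 0].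

Lemma measurable_coord_subspace k :
  measurable (coord_subspace k : set (borelRd R d.+1)).
Proof.
by apply: (@measurable_zeros R d.+1 _ (fun i : 'I_d.+1 => (i < k)%N)) => i;
  exact: coord_continuous.
Qed.

Lemma measurable_preimage_coord_subspace (Q : 'M[R]_d.+1) k :
  measurable ((fun a : T => a *m Q) @^-1` coord_subspace k : set (borelRd R d.+1)).
Proof.
by apply: (@measurable_zeros R d.+1 _ (fun i : 'I_d.+1 => (i < k)%N)) => i;
  exact: continuous_mulmx_coord.
Qed.

Lemma coord_subspace_top : coord_subspace d.+1 `<=` ~` @sphere R d.+1.
Proof.
move=> a a0; rewrite /sphere /= big1 => [/esym/eqP|i _]; first by rewrite oner_eq0.
by rewrite a0 // expr0n.
Qed.

Lemma coord_subspace1 : coord_subspace 1 = [set a | a ord0 ord0 = 0].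
Proof.
apply/seteqP; split => a /= a0; first exact: a0.
by move=> i; rewrite ltnS leqn0 => /eqP i0; rewrite (_ : i = ord0) //; exact: val_inj.
Qed.

End CoordinateSubspaces.

Lemma pencil_eq_unique (R : realFieldType) (s t x y : R) :
  0 <= s -> 0 <= t -> s != t ->
  (s ^+ 2 - 1) * x - 2 * s * y = 0 -> (t ^+ 2 - 1) * x - 2 * t * y = 0 ->
  x = 0 /\ y = 0.
Proof.
move=> s0 t0 st es et.
have x0 : x = 0.
  have : (s - t) * (s * t + 1) * x =
      t * ((s ^+ 2 - 1) * x - 2 * s * y) - s * ((t ^+ 2 - 1) * x - 2 * t * y).
    by ring.
  rewrite es et !mulr0 subrr => /eqP; rewrite !mulf_eq0 subr_eq0 (negbTE st) /=.
  by rewrite gt_eqF ?ltr_pwDr ?mulr_ge0 //= => /eqP.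
split=> //; have : - 2 * ((s + t) * y) =
    ((s ^+ 2 - 1) * x - 2 * s * y) + ((t ^+ 2 - 1) * x - 2 * t * y).
  by rewrite x0; ring.
rewrite es et addr0 => /eqP; rewrite !mulf_eq0 oppr_eq0 pnatr_eq0 /=.
case/orP=> [|/eqP //]; rewrite paddr_eq0 // => /andP[/eqP s_0 /eqP t_0].
by move: st; rewrite s_0 t_0 eqxx.
Qed.

Section Pencil.
Variables (R : realType) (d k : nat).
Hypothesis lt_k : (k.+1 < d.+1)%N.
Implicit Types (a : 'rV[R]_d.+1) (s t : R).

Let i1 : 'I_d.+1 := Ordinal (ltnW lt_k).
Let i2 : 'I_d.+1 := Ordinal lt_k.

Let i1_neq_i2 : (i1 == i2) = false.
Proof. by apply/eqP => /(congr1 val) /=; lia. Qed.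

Definition pencil t : 'rV[R]_d.+1 := \row_j (if j == i2 then t else (j == i1)%:R).

Lemma dotp_pencil a t : dotp a (pencil t) = a ord0 i1 + t * a ord0 i2.
Proof.
rewrite /dotp (bigD1 i2) //= (bigD1 i1) ?i1_neq_i2 //= big1 => [|j /andP[j2 j1]].
  by rewrite !mxE eqxx i1_neq_i2 eqxx mulr1 addr0 mulrC addrC.
by rewrite !mxE (negbTE j2) (negbTE j1) mulr0.
Qed.

Lemma dotpp_pencil t : dotp (pencil t) (pencil t) = 1 + t ^+ 2.
Proof. by rewrite dotp_pencil !mxE eqxx i1_neq_i2 eqxx expr2. Qed.

Let pencil_norm_neq0 t : 1 + t ^+ 2 != 0.
Proof. by rewrite gt_eqF // ltr_pwDl ?sqr_ge0. Qed.

Lemma pencil_neq0 t : pencil t != 0.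
Proof. by rewrite -dotpp_eq0 dotpp_pencil pencil_norm_neq0. Qed.

Lemma reflection_pencil_coord a t i : i != i1 -> i != i2 ->
  (a *m reflection (pencil t)) ord0 i = a ord0 i.
Proof. by move=> /negbTE i1F /negbTE i2F; rewrite reflectionE !mxE i1F i2F mulr0 subr0. Qed.

Lemma reflection_pencil_k a t :
  (a *m reflection (pencil t)) ord0 i1 * (1 + t ^+ 2) =
  (t ^+ 2 - 1) * a ord0 i1 - 2 * t * a ord0 i2.
Proof.
rewrite reflectionE !mxE i1_neq_i2 eqxx mulr1 dotp_pencil dotpp_pencil.
by field; exact: pencil_norm_neq0.
Qed.

Definition pencil_preimage t : set 'rV[R]_d.+1 :=
  (fun a => a *m reflection (pencil t)) @^-1` @coord_subspace R d k.+1.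

Lemma pencil_preimage_overlap s t : 0 <= s -> 0 <= t -> s != t ->
  pencil_preimage s `&` pencil_preimage t `<=` @coord_subspace R d k.+2.
Proof.
move=> s0 t0 st a [Ps Pt].
have low (i : 'I_d.+1) : (i < k)%N -> a ord0 i = 0.
  move=> lt_i; have ne1 : i != i1 by apply/eqP => /(congr1 val) /=; lia.
  have ne2 : i != i2 by apply/eqP => /(congr1 val) /=; lia.
  by rewrite -(reflection_pencil_coord a s ne1 ne2) Ps // ltnW.
have eq_u u : pencil_preimage u a -> (u ^+ 2 - 1) * a ord0 i1 - 2 * u * a ord0 i2 = 0.
  by move=> Pu; rewrite -reflection_pencil_k (Pu i1) ?mul0r.
have [a1 a2] := pencil_eq_unique s0 t0 st (eq_u s Ps) (eq_u t Pt).
move=> i lt_i; have [/low //|ge_i] := ltnP i k.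
have [lt_i1|ge_i1] := ltnP i k.+1.
  by rewrite (_ : i = i1) //; apply: val_inj => /=; lia.
by rewrite (_ : i = i2) //; apply: val_inj => /=; lia.
Qed.

End Pencil.

Section NullHyperplane.
Variables (R : realType) (d : nat) (mu : probability (borelRd R d.+1) R).
Hypothesis mu_unif : uniform_on_sphere mu.

Lemma mu_coord_subspace_top : mu (@coord_subspace R d d.+1) = 0%E.
Proof.
have mS : measurable (~` @sphere R d.+1 : set (borelRd R d.+1)).
  by apply: measurableC; exact: measurable_sphere.
exact: (subset_measure0 (measurable_coord_subspace _) mS (@coord_subspace_top R d) mu_unif.1).
Qed.

(* All reflections [x |-> x * reflection (pencil t)] preserve [mu], and the
   preimages of [coord_subspace k.+1] under them meet only inside [coord_subspace k.+2]. *)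
Lemma mu_coord_subspace_step k : (k.+1 < d.+1)%N ->
  mu (@coord_subspace R d k.+2) = 0%E -> mu (@coord_subspace R d k.+1) = 0%E.
Proof.
move=> lt_k null_k2.
apply: (@probability_null_of_overlapping _ _ _ mu _ _
  (fun t : nat => pencil_preimage lt_k t%:R) _ _ null_k2).
- exact: measurable_coord_subspace.
- exact: measurable_coord_subspace.
- by move=> t; exact: measurable_preimage_coord_subspace.
- move=> t; apply: mu_unif.2; last exact: measurable_coord_subspace.
  exact/reflection_orthogonal/pencil_neq0.
- by move=> s t st; apply: pencil_preimage_overlap; rewrite ?eqr_nat.
Qed.

Lemma mu_coord_hyperplane : mu [set a : 'rV[R]_d.+1 | a ord0 ord0 = 0] = 0%E.
Proof.
have null m k : (k.+1 + m = d.+1)%N -> mu (@coord_subspace R d k.+1) = 0%E.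
  elim: m k => [|m IH] k km.
    by move: km; rewrite addn0 => ->; exact: mu_coord_subspace_top.
  by apply: mu_coord_subspace_step; [lia | apply: IH; lia].
by rewrite -coord_subspace1 (null d).
Qed.

End NullHyperplane.

Section Bands.
Variables (R : realType) (d : nat).
Local Notation T := 'rV[R]_d.+1.

Definition band (eps : R) (w : T) : set T := [set a | `|dotp a w| < eps * l1norm w].

Definition transverse (I : finType) (eps : R) (w : I -> T) : set T :=
  [set a | forall i, eps * l1norm (w i) <= `|dotp a (w i)|].

Lemma measurable_band eps w : measurable (band eps w : set (borelRd R d.+1)).
Proof. by apply: measurable_norm_lt; exact: continuous_dotp. Qed.

Lemma transverseE (I : finType) eps (w : I -> T) :
  transverse eps w = ~` \big[setU/set0]_(i : I) band eps (w i).
Proof.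
rewrite -bigcup_seq; apply/seteqP; split => a /= aT.
  by move=> [i _]; rewrite /band /= ltNge aT.
by move=> i; rewrite leNgt; apply/negP => ai; apply: aT; exists i; rewrite //= mem_index_enum.
Qed.

Lemma measurable_transverse (I : finType) eps (w : I -> T) :
  measurable (transverse eps w : set (borelRd R d.+1)).
Proof.
rewrite transverseE; apply/measurableC/bigsetU_measurable => i _.
exact: measurable_band.
Qed.

(* A Householder reflection maps the first coordinate axis onto [u]. *)
Lemma exists_orthogonal_dotp (u : T) : dotp u u = 1 -> exists Q : 'M[R]_d.+1,
  orthogonal_mx Q /\ forall a : T, (a *m Q) ord0 ord0 = dotp a u.
Proof.
move=> uu; pose e : T := \row_j (j == ord0)%:R.
have [eu|neu] := eqVneq (e - u) 0.
  exists 1%:M; split=> [|a]; first by rewrite /orthogonal_mx trmx1 mulmx1.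
  by move/eqP: eu; rewrite subr_eq0 => /eqP <-; rewrite mulmx1 dotp_delta.
exists (reflection (e - u)); split=> [|a]; first exact: reflection_orthogonal.
have ee : dotp e e = 1 by rewrite dotp_delta mxE eqxx.
have ue : dotp u e = u ord0 ord0 by rewrite dotp_delta.
have ww : dotp (e - u) (e - u) = 2 * (1 - u ord0 ord0).
  by rewrite dotpBl !dotpBr ee ue (dotpC e u) ue uu; ring.
have ww0 : 2 * (1 - u ord0 ord0) != 0 by rewrite -ww dotpp_eq0.
rewrite reflectionE !mxE eqxx /= dotpBr dotp_delta ww.
by field; move: ww0; rewrite mulf_eq0 negb_or => /andP[].
Qed.

Variables (mu : probability (borelRd R d.+1) R).
Hypothesis mu_unif : uniform_on_sphere mu.

Lemma mu_band_unit (u : T) (eta : R) : dotp u u = 1 ->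
  mu [set a : T | `|dotp a u| < eta] = mu [set a : T | `|a ord0 ord0| < eta].
Proof.
move=> uu; have [Q [oQ QE]] := exists_orthogonal_dotp uu.
rewrite -(mu_unif.2 _ _ oQ (measurable_norm_lt _ (@coord_continuous _ _ _ _ _))).
by congr (mu _); apply/seteqP; split => a /=; rewrite QE.
Qed.

Lemma mu_coord_band_small (del : R) : 0 < del ->
  exists2 eta : R, 0 < eta & (mu [set a : T | (`|a ord0 ord0| < eta)%R] < del%:E)%E.
Proof.
move=> del0; pose F (m : nat) := [set a : T | `|a ord0 ord0| < m.+1%:R^-1].
have mF m : measurable (F m : set (borelRd R d.+1)).
  by apply: measurable_norm_lt; exact: coord_continuous.
have capF : \bigcap_m F m = [set a : T | a ord0 ord0 = 0].
  apply/seteqP; split => a /= Fa; last by move=> m _; rewrite /F /= Fa normr0 invr_gt0.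
  apply/eqP/negPn/negP => a0.
  have := Fa (Num.Def.archi_bound `|a ord0 ord0|^-1) I; rewrite /F /= ltNge => /negP; apply.
  rewrite -[leRHS]invrK lef_pV2 ?posrE ?invr_gt0 ?normr_gt0 //.
  by rewrite ltW // (lt_le_trans (archi_boundP _)) ?invr_ge0 ?ler_nat.
have F_decr : nonincreasing_seq F.
  move=> m m' le_m; apply/subsetPset => a; rewrite /F /= => Fa.
  by rewrite (lt_le_trans Fa) // lef_pV2 ?posrE // ler_nat.
have F0 : (mu (F 0%N) < +oo)%E by rewrite (le_lt_trans (probability_le1 _ (mF 0%N))) ?ltry.
have mcap : measurable (\bigcap_m F m : set (borelRd R d.+1)).
  by rewrite capF -coord_subspace1; exact: measurable_coord_subspace.
have cvg_F := nonincreasing_cvg_mu F0 mF mcap F_decr; rewrite capF in cvg_F.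
(* [mu] occurs as a probability in [mu_coord_hyperplane] and as a measure in [cvg_F]:
   the two are only convertible, so the limit is replaced by conversion, not rewriting. *)
have cvg_to0 (l : \bar R) : l = 0%E -> (mu \o F) @ \oo --> l -> (mu \o F) @ \oo --> 0%E.
  by move=> ->.
move: (cvg_to0 _ (mu_coord_hyperplane mu_unif) cvg_F) => /(_ [set y | (y < del%:E)%E]).
case=> [|N _ FN]; first by apply: open_ereal_lt'; rewrite lte_fin.
by exists N.+1%:R^-1; [rewrite invr_gt0 | exact: (FN N (leqnn N))].
Qed.

Lemma mu_band_le (w : T) (eta : R) : 0 < eta ->
  (mu (band (eta / d.+1%:R) w) <= mu [set a : T | (`|a ord0 ord0| < eta)%R])%E.
Proof.
move=> eta0; have [w0|nw0] := eqVneq w 0.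
  have -> : band (eta / d.+1%:R) w = set0.
    apply/seteqP; split => a //=; rewrite /band /= w0 /l1norm big1 ?mulr0 ?normr_lt0 //.
    by move=> i _; rewrite mxE normr0.
  by rewrite measure0; exact: measure_ge0.
have ww : 0 < dotp w w by rewrite lt_neqAle eq_sym dotpp_eq0 nw0 dotpp_ge0.
set r := Num.sqrt (dotp w w); have r0 : 0 < r by rewrite sqrtr_gt0.
have uu : dotp (r^-1 *: w) (r^-1 *: w) = 1.
  by rewrite dotpZr dotpC dotpZr mulrA -expr2 exprVn sqr_sqrtr ?mulVf ?gt_eqF // ltW.
rewrite -(mu_band_unit eta uu); apply: le_measure; rewrite ?inE.
- exact: measurable_band.
- by apply: measurable_norm_lt; exact: continuous_dotp.
move=> a /= a_band; rewrite dotpZr normrM ger0_norm ?invr_ge0 ?(ltW r0) //.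
rewrite mulrC ltr_pdivrMr //; apply: (lt_le_trans a_band).
rewrite mulrAC ler_pdivrMr // -mulrA ler_wpM2l ?(ltW eta0) // mulrC.
exact: l1norm_le_sqrt_dotpp.
Qed.

End Bands.

Section LowerLipschitz.
Variables (R : realType) (d : nat) (mu : probability (borelRd R d.+1) R).
Hypothesis mu_unif : uniform_on_sphere mu.
Local Notation T := 'rV[R]_d.+1.

(* Union bound over the [#|I|] bands, each of measure below [1 / (2 (#|I| + 1))]. *)
Lemma exists_transverse_half (I : finType) : exists2 eps : R, 0 < eps &
  forall w : I -> T, ((2^-1)%:E <= mu (transverse eps w))%E.
Proof.
pose del : R := (2 * #|I|.+1%:R)^-1.
have [eta eta0 small] : exists2 eta : R, 0 < eta &
    (mu [set a : T | (`|a ord0 ord0| < eta)%R] < del%:E)%E.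
  by apply: mu_coord_band_small; rewrite // invr_gt0 mulr_gt0.
exists (eta / d.+1%:R); first by rewrite divr_gt0.
move=> w; set B := \big[setU/set0]_(i : I) band (eta / d.+1%:R) (w i).
have mB : measurable (B : set (borelRd R d.+1)).
  by apply: bigsetU_measurable => i _; exact: measurable_band.
have muB : (mu B <= (#|I|%:R * del)%:E)%E.
  apply: le_trans (measure_bigsetU_le _ _ (fun i => measurable_band _ _)) _.
  apply: (@le_trans _ _ (\sum_(i : I) del%:E)).
    by apply: lee_sum => i _; apply: le_trans (ltW small); exact: mu_band_le.
  by rewrite sumEFin sumr_const mulr_natl.
rewrite transverseE probability_setC // -(fineK (fin_num_measure mu _ mB)) -EFinB lee_fin.
rewrite -(fineK (fin_num_measure mu _ mB)) lee_fin in muB.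
suff : #|I|%:R * del <= 2^-1 by lra.
rewrite -(_ : #|I|.+1%:R * del = 2^-1); last by rewrite /del; field.
by rewrite ler_wpM2r ?invr_ge0 ?mulr_ge0 ?ler_nat.
Qed.

(* On the transverse directions, which have probability at least 1/2, the ratio
   [lp_dist / W1] is at least [eps / (n + 1)]. *)
Lemma s_embed_lower_lipschitz (n : nat) (p : R) : 0 < p -> exists2 c : R, 0 < c &
  forall X Y : 'I_n -> T, 0 < W1 X Y ->
  ((c `^ p)%:E <= \int[mu]_(a in setT)
     ((lp_dist n p (s_embed X a) (s_embed Y a) / W1 X Y) `^ p)%:E)%E.
Proof.
move=> p0; have [eps eps0 half] := exists_transverse_half ('I_n * 'I_n)%type.
pose k := (eps / n.+1%:R) `^ p; have k0 : 0 < k by rewrite powR_gt0 ?divr_gt0.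
exists ((k / 2) `^ p^-1); first by rewrite powR_gt0 ?divr_gt0.
move=> X Y W0; rewrite -powRrM mulVf ?gt_eqF // powRr1; last by rewrite divr_ge0 // ltW.
pose w (jk : 'I_n * 'I_n) := X jk.1 - Y jk.2.
have ratio_ge a : transverse eps w a ->
    (k%:E <= ((lp_dist n p (s_embed X a) (s_embed Y a) / W1 X Y) `^ p)%:E)%E.
  move=> aw; rewrite lee_fin; apply: powR_le_powR; [exact: ltW | by rewrite divr_ge0 // ltW |].
  rewrite ler_pdivlMr // mulrAC ler_pdivrMr //.
  apply: le_trans (W1_le_sum_sort_dist (X := X) (Y := Y) (ltW eps0) (fun j k => aw (j, k))) _.
  apply: le_trans (sum_dist_le_lp_dist _ _ _ p0) _.
  by rewrite mulrC ler_wpM2l ?lp_dist_ge0 ?ler_nat.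
apply: le_trans (measure_scale_le_integral mu (ltW k0) (measurable_transverse eps w) _ ratio_ge);
  last by move=> a; rewrite lee_fin powR_ge0.
rewrite EFinM; apply: lee_wpmul2l; first by rewrite lee_fin ltW.
exact: half.
Qed.

End LowerLipschitz.

Lemma not_uniform_on_sphere0 (R : realType) (mu : probability (borelRd R 0) R) :
  ~ uniform_on_sphere mu.
Proof.
case=> mu_sphere _; move: mu_sphere.
have -> : ~` @sphere R 0 = setT.
  apply/seteqP; split => a //= _; rewrite /sphere /= big_ord0 => /esym/eqP.
  by rewrite oner_eq0.
by rewrite probability_setT => /eqP; rewrite onee_eq0.
Qed.

Unset Implicit Arguments.

Theorem mainTheorem7 (R : realType) (d n : nat) (p : R)
  (Om : set 'rV[R]_d) (mu : probability (borelRd R d) R) :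
  1 <= p -> compact Om -> uniform_on_sphere mu ->
  (* uniformly Lipschitz *)
  (exists L : R, forall a : 'rV[R]_d, @sphere R d a ->
     forall X Y : 'I_n -> 'rV[R]_d, multiset_in Om X -> multiset_in Om Y ->
       lp_dist n p (s_embed X a) (s_embed Y a) <= L * W1 X Y) /\
  (* lower Lipschitz in expectation *)
  (exists c : R, 0 < c /\
     forall X Y : 'I_n -> 'rV[R]_d, multiset_in Om X -> multiset_in Om Y ->
       0 < W1 X Y ->
       ((c `^ p)%:E <=
        \int[mu]_(a in setT)
           ((lp_dist n p (s_embed X a) (s_embed Y a) / W1 X Y) `^ p)%:E)%E).
Proof.
move=> p1 _ mu_unif; split.
  by exists n.+1%:R => a sa X Y _ _; exact: s_embed_lipschitz p1 sa.
case: d Om mu mu_unif => [|d] Om mu mu_unif; first by case: (not_uniform_on_sphere0 mu_unif).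
have [c c0 lower] := s_embed_lower_lipschitz mu_unif n (lt_le_trans ltr01 p1).
by exists c; split => // X Y _ _; exact: lower.
Qed.
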